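(* Let $A$ be a Nakayama algebra. Then the number of isomorphism classes of indecomposable projective $A$-modules of injective dimension equal to one equals the number of isomorphism classes of indecomposable injective $A$-modules of projective dimension equal to one.
   Context: $A$ is a finite-dimensional algebra over a field $K$ given by a connected quiver and admissible relations; it is a Nakayama algebra if every indecomposable (finite-dimensional right) module is uniserial, i.e. has a unique composition series. *)

From HB Require Import structures.
From mathcomp Require Import all_boot all_order all_algebra.
From mathcomp Require Import falgebra.
Set Implicit Arguments. Unset Strict Implicit. Unset Printing Implicit Defensive.
Import GRing.Theory.
Local Open Scope ring_scope.

Section Modules.
Variables (K : fieldType) (A : falgType K).

(* A finite-dimensional right A-module: the K-space 'rV[K]_rdim, where
   v . a := v *m ract a.  Right module axiom v.(ab) = (v.a).b. *)
Record rmod := RMod {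
  rdim : nat;
  ract : A -> 'M[K]_rdim;
  ract_lin : forall (k : K) (a b : A), ract (k *: a + b) = k *: ract a + ract b;
  ract1 : ract 1 = 1%:M;
  ractM : forall a b : A, ract (a * b) = ract a *m ract b
}.

(* A-module homomorphisms M -> N, acting by v |-> v *m f. *)
Definition is_hom (M N : rmod) (f : 'M[K]_(rdim M, rdim N)) : Prop :=
  forall a : A, ract M a *m f = f *m ract N a.

Definition iso (M N : rmod) : Prop :=
  exists (f : 'M[K]_(rdim M, rdim N)) (g : 'M[K]_(rdim N, rdim M)),
    [/\ is_hom f, is_hom g, f *m g = 1%:M & g *m f = 1%:M].

(* submodules = A-stable subspaces (row spaces of square matrices) *)
Definition submod (M : rmod) (U : 'M[K]_(rdim M)) : Prop :=
  forall a : A, (U *m ract M a <= U)%MS.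

Definition indecomposable (M : rmod) : Prop :=
  (0 < rdim M)%N /\
  forall U V : 'M[K]_(rdim M), submod U -> submod V ->
    (1%:M <= U + V)%MS -> (U :&: V <= (0 : 'M[K]_(rdim M)))%MS ->
    U = 0 \/ V = 0.

Definition uniserial (M : rmod) : Prop :=
  forall U V : 'M[K]_(rdim M), submod U -> submod V ->
    (U <= V)%MS \/ (V <= U)%MS.

Definition simple_mod (M : rmod) : Prop :=
  (0 < rdim M)%N /\
  forall U : 'M[K]_(rdim M), submod U -> U = 0 \/ (1%:M <= U)%MS.

Definition projective_mod (P : rmod) : Prop :=
  forall (N L : rmod) (g : 'M[K]_(rdim N, rdim L)) (f : 'M[K]_(rdim P, rdim L)),
    is_hom g -> row_full g -> is_hom f ->
    exists h : 'M[K]_(rdim P, rdim N), is_hom h /\ h *m g = f.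

Definition injective_mod (I : rmod) : Prop :=
  forall (L N : rmod) (g : 'M[K]_(rdim L, rdim N)) (f : 'M[K]_(rdim L, rdim I)),
    is_hom g -> row_free g -> is_hom f ->
    exists h : 'M[K]_(rdim N, rdim I), is_hom h /\ g *m h = f.

(* pd M <= n : there is a projective resolution
   0 -> P_n -> ... -> P_1 -> P_0 -> M -> 0 *)
Definition pd_le (M : rmod) (n : nat) : Prop :=
  exists (P : nat -> rmod) (d : forall i, 'M[K]_(rdim (P i.+1), rdim (P i)))
         (e : 'M[K]_(rdim (P 0%N), rdim M)),
    [/\ forall i, projective_mod (P i),
        forall i, is_hom (d i),
        [/\ is_hom e, row_full e & (kermx e == d 0%N)%MS],
        forall i, (kermx (d i) == d i.+1)%MS &
        rdim (P n.+1) = 0%N].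

(* id M <= n : there is an injective coresolution
   0 -> M -> I_0 -> I_1 -> ... -> I_n -> 0 *)
Definition id_le (M : rmod) (n : nat) : Prop :=
  exists (I : nat -> rmod) (d : forall i, 'M[K]_(rdim (I i), rdim (I i.+1)))
         (e : 'M[K]_(rdim M, rdim (I 0%N))),
    [/\ forall i, injective_mod (I i),
        forall i, is_hom (d i),
        [/\ is_hom e, row_free e & (e == kermx (d 0%N))%MS],
        forall i, (d i == kermx (d i.+1))%MS &
        rdim (I n.+1) = 0%N].

Definition proj_dim_eq (M : rmod) (n : nat) : Prop :=
  pd_le M n /\ forall m, (m < n)%N -> ~ pd_le M m.

Definition inj_dim_eq (M : rmod) (n : nat) : Prop :=
  id_le M n /\ forall m, (m < n)%N -> ~ id_le M m.

Definition num_iso_classes (Q : rmod -> Prop) (n : nat) : Prop :=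
  exists s : 'I_n -> rmod,
    [/\ forall i, Q (s i),
        forall i j, iso (s i) (s j) -> i = j &
        forall M, Q M -> exists i, iso M (s i)].

Definition connected_alg : Prop :=
  forall e : A, e * e = e -> (forall a : A, e * a = a * e) -> e = 0 \/ e = 1.

(* A elementary (A/rad A = K x ... x K, i.e. A = KQ/I for a quiver Q and an
   admissible ideal I, by Gabriel): every simple module is one-dimensional *)
Definition elementary_alg : Prop :=
  forall S : rmod, simple_mod S -> rdim S = 1%N.

Definition nakayama : Prop :=
  forall M : rmod, indecomposable M -> uniserial M.

End Modules.

From HB Require Import structures.
From mathcomp Require Import all_boot all_order all_algebra.
From mathcomp Require Import falgebra.
From mathcomp Require Import zify.
From Stdlib Require Import Classical ClassicalEpsilon.
Set Implicit Arguments. Unset Strict Implicit. Unset Printing Implicit Defensive.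
Import GRing.Theory.
Import VectorInternalTheory.
Local Open Scope ring_scope.

(* A
   maximal-dimension argument then shows that every indecomposable projective
   P embeds into an indecomposable projective-injective module Q, and dually
   that every indecomposable injective is a quotient of one.  If moreover
   id P = 1, then Q is a direct summand, containing P, of the first term of an
   injective coresolution 0 -> P -> I0 -> I1 -> 0, so J = Q/P is a direct
   summand of I1, hence injective, and 0 -> P -> Q -> J -> 0 shows pd J = 1;
   dually, the kernel of a projective-injective cover of an injective J with
   pd J = 1 is projective with id = 1.  Maps between two such middle terms are
   isomorphisms by uniseriality and a dimension count, so P |-> Q/P induces a
   bijection between the two sets of isomorphism classes, which are finite
   because every indecomposable projective is a summand of A. *)

Lemma ex_max_bounded (P : nat -> Prop) b :
  (exists n, P n) -> (forall n, P n -> (n <= b)%N) ->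
  exists n, P n /\ forall m, P m -> (m <= n)%N.
Proof.
elim: b => [|b IHb] [n Pn] le_b.
  by exists n; split => // m /le_b; rewrite leqn0 => /eqP ->.
have [Pb | nPb] := classic (P b.+1); first by exists b.+1.
apply: IHb => [|m Pm]; first by exists n.
have := le_b m Pm; rewrite leq_eqVlt => /orP[/eqP mb | //].
by rewrite mb in Pm.
Qed.

Section MatrixFacts.
Variable K : fieldType.

Lemma row_free_leq m n (f : 'M[K]_(m, n)) : row_free f -> (m <= n)%N.
Proof. by move=> /eqP <-; exact: rank_leq_col. Qed.

Lemma row_full_geq m n (f : 'M[K]_(m, n)) : row_full f -> (n <= m)%N.
Proof. by move=> /eqP <-; exact: rank_leq_row. Qed.

Lemma row_freeM m n p (f : 'M[K]_(m, n)) (g : 'M[K]_(n, p)) :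
  row_free f -> row_free g -> row_free (f *m g).
Proof. by move=> ff fg; rewrite /row_free mxrankMfree. Qed.

Lemma row_fullM m n p (f : 'M[K]_(m, n)) (g : 'M[K]_(n, p)) :
  row_full f -> row_full g -> row_full (f *m g).
Proof. by move=> ff; rewrite /row_full (eqmxMfull g ff). Qed.

Lemma row_free_mulmxl m n p (f : 'M[K]_(m, n)) (g : 'M[K]_(n, p)) :
  row_free (f *m g) -> row_free f.
Proof. by rewrite -!row_leq_rank => /leq_trans; apply; exact: mxrankM_maxl. Qed.

Lemma row_full_mulmxr m n p (f : 'M[K]_(m, n)) (g : 'M[K]_(n, p)) :
  row_full (f *m g) -> row_full g.
Proof. by rewrite -!col_leq_rank => /leq_trans; apply; exact: mxrankM_maxr. Qed.

Lemma row_free_invertible m n (f : 'M[K]_(m, n)) : row_free f -> (n <= m)%N ->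
  exists g, f *m g = 1%:M /\ g *m f = 1%:M.
Proof.
move=> ff le; have [g fg] := row_freeP ff.
have [h hf] : exists h, h *m f = 1%:M.
  by apply/row_fullP; rewrite -col_leq_rank (eqP ff).
have hg : h = g by rewrite -[h]mulmx1 -fg mulmxA hf mul1mx.
by exists g; split; rewrite // -hg.
Qed.

Lemma row_full_invertible m n (f : 'M[K]_(m, n)) : row_full f -> (m <= n)%N ->
  exists g, f *m g = 1%:M /\ g *m f = 1%:M.
Proof.
move=> ff le; apply: row_free_invertible (row_full_geq ff).
by rewrite -row_leq_rank (eqP ff).
Qed.

Lemma mx_ncols0 m n (X : 'M[K]_(m, n)) : n = 0%N -> X = 0.
Proof. by move=> n0; subst n; rewrite thinmx0. Qed.

Lemma mx_nrows0 m n (X : 'M[K]_(m, n)) : m = 0%N -> X = 0.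
Proof. by move=> m0; subst m; rewrite flatmx0. Qed.

Lemma eqmx_ncols0 m1 m2 (X : 'M[K]_(m1, 0)) (Y : 'M[K]_(m2, 0)) : (X == Y)%MS.
Proof. by rewrite !thinmx0 !sub0mx. Qed.

Lemma scalar1_neq0 n : (0 < n)%N -> (1%:M : 'M[K]_n) != 0.
Proof. by move=> n_gt0; rewrite -mxrank_eq0 mxrank1 -lt0n. Qed.

Definition rowfun_mx m n (g : 'rV[K]_m -> 'rV[K]_n) : 'M[K]_(m, n) :=
  \matrix_(i < m) g (delta_mx 0 i).

Lemma mul_rowfun_mx m n (g : 'rV[K]_m -> 'rV[K]_n) (u : 'rV_m) :
  linear g -> u *m rowfun_mx g = g u.
Proof.
move=> lg; have gD x y : g (x + y) = g x + g y by rewrite -[x]scale1r lg !scale1r.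
have g0 : g 0 = 0 by apply: (addrI (g 0)); rewrite -gD !addr0.
have gZ k x : g (k *: x) = k *: g x by rewrite -[k *: x]addr0 lg g0 addr0.
rewrite mulmx_sum_row {2}(row_sum_delta u) (big_morph g gD g0).
by apply: eq_bigr => i _; rewrite rowK gZ.
Qed.

End MatrixFacts.

Section Modules.
Variables (K : fieldType) (A : falgType K).
Local Notation rmod := (rmod A).

Lemma hom_mul (M N L : rmod) (f : 'M_(rdim M, rdim N)) (g : 'M_(rdim N, rdim L)) :
  is_hom f -> is_hom g -> is_hom (f *m g).
Proof. by move=> hf hg a; rewrite mulmxA hf -mulmxA hg mulmxA. Qed.

Lemma hom1 (M : rmod) : is_hom (1%:M : 'M_(rdim M)).
Proof. by move=> a; rewrite mulmx1 mul1mx. Qed.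

Lemma hom0 (M N : rmod) : is_hom (0 : 'M_(rdim M, rdim N)).
Proof. by move=> a; rewrite mulmx0 mul0mx. Qed.

Lemma hom_inv (M N : rmod) (f : 'M_(rdim M, rdim N)) g :
  is_hom f -> f *m g = 1%:M -> g *m f = 1%:M -> is_hom g.
Proof.
move=> hf fg gf a.
by rewrite -[ract N a *m g]mul1mx -gf -!mulmxA (mulmxA f) -hf -mulmxA fg mulmx1.
Qed.

Lemma iso_sym (M N : rmod) : iso M N -> iso N M.
Proof. by case=> f [g [hf hg fg gf]]; exists g, f. Qed.

Lemma iso_trans (M N L : rmod) : iso M N -> iso N L -> iso M L.
Proof.
case=> f [g [hf hg fg gf]] [f' [g' [hf' hg' fg' gf']]].
exists (f *m f'), (g' *m g); split; try exact: hom_mul.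
  by rewrite mulmxA -(mulmxA f) fg' mulmx1 fg.
by rewrite mulmxA -(mulmxA g') gf mulmx1 gf'.
Qed.

Lemma projective_retract (P Q : rmod) (s : 'M_(rdim P, rdim Q)) (r : 'M_(rdim Q, rdim P)) :
  is_hom s -> is_hom r -> s *m r = 1%:M -> projective_mod Q -> projective_mod P.
Proof.
move=> hs hr sr pQ N L g f hg fg hf.
have [h [hh hgf]] := pQ N L g (r *m f) hg fg (hom_mul hr hf).
exists (s *m h); split; first exact: hom_mul.
by rewrite -mulmxA hgf mulmxA sr mul1mx.
Qed.

Lemma injective_retract (J I : rmod) (s : 'M_(rdim J, rdim I)) (r : 'M_(rdim I, rdim J)) :
  is_hom s -> is_hom r -> s *m r = 1%:M -> injective_mod I -> injective_mod J.
Proof.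
move=> hs hr sr iI L N g f hg fg hf.
have [h [hh hgf]] := iI L N g (f *m s) hg fg (hom_mul hf hs).
exists (h *m r); split; first exact: hom_mul.
by rewrite mulmxA hgf -mulmxA sr mulmx1.
Qed.

Lemma lift_mono (X M N : rmod) (f : 'M_(rdim X, rdim N)) (g : 'M_(rdim M, rdim N)) :
  is_hom f -> is_hom g -> row_free g -> (f <= g)%MS ->
  exists h : 'M_(rdim X, rdim M), is_hom h /\ h *m g = f.
Proof.
move=> hf hg fg sfg; have hgf := mulmxKpV sfg; set h := f *m pinvmx g in hgf *.
exists h; split => // a; apply: (row_free_inj fg) => /=.
by rewrite -mulmxA hgf hf -(mulmxA h) hg mulmxA hgf.
Qed.

Lemma factor_epi (Q J N : rmod) (p : 'M_(rdim Q, rdim J)) (f : 'M_(rdim Q, rdim N)) :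
  is_hom p -> row_full p -> is_hom f -> kermx p *m f = 0 ->
  exists h : 'M_(rdim J, rdim N), is_hom h /\ p *m h = f.
Proof.
move=> hp fp hf kf; have [q qp] := row_fullP fp.
have pqf : p *m (q *m f) = f.
  have /submxP [D eD] : (p *m q - 1%:M <= kermx p)%MS.
    by apply/sub_kermxP; rewrite mulmxBl mul1mx -mulmxA qp mulmx1 subrr.
  apply/eqP; rewrite -subr_eq0 mulmxA -[f in _ - f]mul1mx -mulmxBl eD.
  by rewrite -mulmxA kf mulmx0.
exists (q *m f); split => // a; apply: (row_full_inj fp).
by rewrite mulmxA -hp -mulmxA pqf hf mulmxA pqf.
Qed.

Definition rzero : rmod.
Proof. by refine (@RMod _ _ 0%N (fun _ => 0) _ _ _) => *; rewrite !flatmx0. Defined.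

Lemma projective_rzero : projective_mod rzero.
Proof. by move=> N L g f _ _ _; exists 0; split; [exact: hom0 | rewrite !flatmx0]. Qed.

Lemma injective_rzero : injective_mod rzero.
Proof. by move=> L N g f _ _ _; exists 0; split; [exact: hom0 | rewrite !thinmx0]. Qed.

Definition stable (M : rmod) k (X : 'M[K]_(k, rdim M)) := forall a, (X *m ract M a <= X)%MS.

Lemma stable_genmx (M : rmod) k (X : 'M_(k, rdim M)) : stable X -> submod <<X>>%MS.
Proof. by move=> sX a; rewrite (eqmxMr _ (genmxE X)) genmxE; apply: sX. Qed.

Lemma stable_img (M N : rmod) (f : 'M_(rdim M, rdim N)) : is_hom f -> stable f.
Proof. by move=> hf a; rewrite -hf submxMl. Qed.

Lemma stable_ker (M N : rmod) (f : 'M_(rdim M, rdim N)) : is_hom f -> stable (kermx f).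
Proof. by move=> hf a; apply/sub_kermxP; rewrite -mulmxA hf mulmxA mulmx_ker mul0mx. Qed.

Lemma stable_adds (M : rmod) k l (X : 'M_(k, rdim M)) (Y : 'M_(l, rdim M)) :
  stable X -> stable Y -> stable (X + Y)%MS.
Proof. by move=> sX sY a; rewrite addsmxMr addsmxS. Qed.

Lemma stable_capmx (M : rmod) k l (X : 'M_(k, rdim M)) (Y : 'M_(l, rdim M)) :
  stable X -> stable Y -> stable (X :&: Y)%MS.
Proof.
move=> sX sY a; rewrite sub_capmx.
rewrite (submx_trans (submxMr _ (capmxSl X Y)) (sX a)).
by rewrite (submx_trans (submxMr _ (capmxSr X Y)) (sY a)).
Qed.

Lemma stable_sumsmx (M : rmod) k (F : 'I_k -> 'M_(rdim M)) :
  (forall i, stable (F i)) -> stable (\sum_(i < k) F i)%MS.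
Proof.
move=> sF; apply: (big_ind (@stable M _)) => // [a|]; first by rewrite mul0mx sub0mx.
exact: stable_adds.
Qed.

Lemma stable_bigcapmx (M : rmod) k (F : 'I_k -> 'M_(rdim M)) :
  (forall i, stable (F i)) -> stable (\bigcap_(i < k) F i)%MS.
Proof.
move=> sF; apply: (big_ind (@stable M _)) => // [a|]; first by rewrite submx1.
exact: stable_capmx.
Qed.

Section Submodule.
Variables (M : rmod) (U : 'M[K]_(rdim M)) (sU : submod U).
Local Notation B := (row_base U).

Lemma stable_row_base : stable B.
Proof. by move=> a; rewrite (eqmxMr (ract M a) (eq_row_base U)) eq_row_base; apply: sU. Qed.

Lemma row_base_pinv : B *m pinvmx B = 1%:M.
Proof. by apply: (row_free_inj (row_base_free U)); rewrite mul1mx mulmxKpV. Qed.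

Definition rsub : rmod.
Proof.
refine (@RMod _ _ (\rank U) (fun a => B *m ract M a *m pinvmx B) _ _ _).
- by move=> k a b; rewrite ract_lin mulmxDr mulmxDl -scalemxAr -scalemxAl.
- by rewrite ract1 mulmx1 row_base_pinv.
- move=> a b; rewrite ractM; set P := pinvmx B.
  by rewrite (mulmxA _ (B *m _) P) (mulmxA _ B) mulmxKpV ?stable_row_base // !mulmxA.
Defined.

Lemma rsub_hom : is_hom (B : 'M_(rdim rsub, rdim M)).
Proof. by move=> a /=; rewrite mulmxKpV ?stable_row_base. Qed.

Lemma rsub_factor (X : rmod) (f : 'M_(rdim X, rdim M)) :
  is_hom f -> (f <= U)%MS ->
  is_hom (f *m pinvmx B : 'M_(rdim X, rdim rsub)) /\ f *m pinvmx B *m B = f.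
Proof.
move=> hf sfU; have sfB : (f <= B)%MS by rewrite eq_row_base.
split; last exact: mulmxKpV.
move=> a /=; rewrite mulmxA hf; set P := pinvmx B.
by rewrite (mulmxA _ (B *m _) P) (mulmxA _ B) mulmxKpV.
Qed.

End Submodule.

(** * Uniserial modules *)

Lemma uniserial_chain (M : rmod) k l (X : 'M_(k, rdim M)) (Y : 'M_(l, rdim M)) :
  uniserial M -> stable X -> stable Y -> (X <= Y)%MS \/ (Y <= X)%MS.
Proof.
by move=> uM sX sY; case: (uM _ _ (stable_genmx sX) (stable_genmx sY)); rewrite !genmxE; auto.
Qed.

Lemma uniserial_adds_full (M : rmod) k l (X : 'M_(k, rdim M)) (Y : 'M_(l, rdim M)) :
  uniserial M -> stable X -> stable Y -> (1%:M <= X + Y)%MS -> ~~ row_full X ->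
  row_full Y.
Proof.
move=> uM sX sY full; rewrite -!sub1mx; apply: contraNT => nY.
case: (uniserial_chain uM sX sY) => [sXY|sYX]; last first.
  by apply: submx_trans full _; rewrite addsmx_sub sYX submx_refl.
by case/negP: nY; apply: submx_trans full _; rewrite addsmx_sub sXY submx_refl.
Qed.

Lemma uniserial_cap0 (M : rmod) k l (X : 'M_(k, rdim M)) (Y : 'M_(l, rdim M)) :
  uniserial M -> stable X -> stable Y -> (X :&: Y <= (0 : 'M_(rdim M)))%MS -> Y != 0 ->
  X = 0.
Proof.
move=> uM sX sY c0 nzY; apply/eqP; rewrite -submx0.
case: (uniserial_chain uM sX sY) => [sXY|sYX].
  by apply: submx_trans (c0); rewrite sub_capmx sXY submx_refl.
by case/negP: nzY; rewrite -submx0; apply: submx_trans c0; rewrite sub_capmx sYX submx_refl.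
Qed.

Lemma uniserial_indecomposable (M : rmod) : uniserial M -> (0 < rdim M)%N -> indecomposable M.
Proof.
move=> uM M_gt0; split => // U V sU sV _ c0.
case: (uM U V sU sV) => [sUV|sVU]; [left|right]; apply/eqP; rewrite -submx0;
  apply: submx_trans c0; by rewrite sub_capmx submx_refl ?sUV ?sVU.
Qed.

Lemma uniserial_of_mono (P Q : rmod) (i : 'M_(rdim P, rdim Q)) :
  uniserial Q -> is_hom i -> row_free i -> uniserial P.
Proof.
move=> uQ hi fi X Y sX sY.
have st (Z : 'M_(rdim P)) : submod Z -> stable (Z *m i).
  by move=> sZ a; rewrite -mulmxA -hi mulmxA submxMr.
by case: (uniserial_chain uQ (st _ sX) (st _ sY)); rewrite !submxMfree //; auto.
Qed.

Lemma uniserial_of_epi (Q J : rmod) (p : 'M_(rdim Q, rdim J)) :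
  uniserial Q -> is_hom p -> row_full p -> uniserial J.
Proof.
move=> uQ hp fp.
pose pre (X : 'M_(rdim J)) := kermx (p *m cokermx X).
have preS X : (pre X *m p <= X)%MS by rewrite submxE -mulmxA; apply/eqP/sub_kermxP.
have st X : submod X -> stable (pre X).
  move=> sX a; apply/sub_kermxP; rewrite mulmxA -(mulmxA _ _ p) hp mulmxA.
  by apply/eqP; rewrite -submxE (submx_trans (submxMr _ (preS X))).
have subp X : (X <= pre X *m p)%MS.
  rewrite -{1}(mulmxKpV (submx_full X fp)) submxMr //; apply/sub_kermxP.
  by rewrite mulmxA mulmxKpV ?submx_full //; apply/eqP; rewrite -submxE.
move=> X Y sX sY; case: (uniserial_chain uQ (st _ sX) (st _ sY)) => h; [left|right].
  exact: submx_trans (subp X) (submx_trans (submxMr _ h) (preS Y)).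
exact: submx_trans (subp Y) (submx_trans (submxMr _ h) (preS X)).
Qed.

(* In a uniserial module, the image of i meets every nonzero submodule. *)
Lemma uniserial_mono_ext (P Q N : rmod) (i : 'M_(rdim P, rdim Q)) (f : 'M_(rdim Q, rdim N)) :
  uniserial Q -> is_hom i -> is_hom f -> row_free i -> (0 < rdim P)%N ->
  row_free (i *m f) -> row_free f.
Proof.
move=> uQ hi hf fi P_gt0 fif; rewrite -kermx_eq0; apply/eqP.
apply: (uniserial_cap0 uQ (stable_ker hf) (stable_img hi)).
  apply/rV_subP => v; rewrite sub_capmx => /andP[/sub_kermxP vf /submxP[z ez]].
  move: vf; rewrite ez -mulmxA => /eqP; rewrite mulmx_free_eq0 // => /eqP ->.
  by rewrite mul0mx sub0mx.
by rewrite -mxrank_eq0 (eqP fi) -lt0n.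
Qed.

Lemma uniserial_epi_lift (X E J : rmod) (q : 'M_(rdim E, rdim J)) (f : 'M_(rdim X, rdim E))
  (e : 'M_(rdim X, rdim J)) :
  uniserial E -> (0 < rdim J)%N -> is_hom q -> row_full q -> is_hom f ->
  row_full e -> f *m q = e -> row_full f.
Proof.
move=> uE J_gt0 hq fq hf fe fqe; have [e' ee'] := row_fullP fe.
have full : (1%:M <= kermx q + f)%MS.
  rewrite -[1%:M](subrK (q *m e' *m f)); apply: addmx_sub_adds; last exact: submxMl.
  by apply/sub_kermxP; rewrite mulmxBl mul1mx -!mulmxA fqe ee' mulmx1 subrr.
apply: (uniserial_adds_full uE (stable_ker hq) (stable_img hf) full).
apply: contraTN fq => /(submx_full 1%:M)/sub_kermxP; rewrite mul1mx => ->.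
by rewrite /row_full mxrank0 eq_sym -lt0n J_gt0.
Qed.

Lemma uniserial_sumsmx_full (M : rmod) k (F : 'I_k -> 'M_(rdim M)) :
  uniserial M -> (0 < rdim M)%N -> (forall i, stable (F i)) ->
  row_full (\sum_(i < k) F i)%MS -> exists i, row_full (F i).
Proof.
move=> uM M_gt0; elim: k F => [|k IHk] F sF.
  by rewrite big_ord0 /row_full mxrank0 eq_sym => /eqP M0; rewrite M0 in M_gt0.
rewrite big_ord_recr /= -sub1mx => full.
set G := fun i => F (widen_ord (leqnSn k) i).
have [fG|nfG] := boolP (row_full (\sum_(i < k) G i)%MS).
  by have [i fi] := IHk G (fun i => sF _) fG; exists (widen_ord (leqnSn k) i).
exists ord_max; apply: uniserial_adds_full uM _ (sF _) full nfG.
exact: stable_sumsmx.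
Qed.

Lemma uniserial_bigcapmx_neq0 (M : rmod) k (F : 'I_k -> 'M_(rdim M)) :
  uniserial M -> (0 < rdim M)%N -> (forall i, stable (F i)) -> (forall i, F i != 0) ->
  (\bigcap_(i < k) F i)%MS != 0.
Proof.
move=> uM M_gt0; elim: k F => [|k IHk] F sF nzF; first by rewrite big_ord0 scalar1_neq0.
rewrite big_ord_recr /= -mxrank_eq0.
set G := fun i => F (widen_ord (leqnSn k) i).
have sG : stable (\bigcap_(i < k) G i)%MS by apply: stable_bigcapmx => i; apply: sF.
have nzG : (\bigcap_(i < k) G i)%MS != 0 by apply: IHk => i; [apply: sF | apply: nzF].
by case: (uniserial_chain uM sG (sF ord_max)) => [/capmx_idPl|/capmx_idPr] ->;
  rewrite mxrank_eq0.
Qed.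

(** * Decompositions into indecomposable summands *)

Record summand (M : rmod) := Summand {
  summand_mod : rmod;
  summand_in : 'M[K]_(rdim summand_mod, rdim M);
  summand_out : 'M[K]_(rdim M, rdim summand_mod) }.

Definition retract (M : rmod) (x : summand M) :=
  [/\ is_hom (summand_in x), is_hom (summand_out x) & summand_in x *m summand_out x = 1%:M].

Definition decomposition (M : rmod) k (s : 'I_k -> summand M) :=
  (forall i, retract (s i)) /\
  \sum_(i < k) summand_out (s i) *m summand_in (s i) = 1%:M.

Definition indec_decomposition (M : rmod) k (s : 'I_k -> summand M) :=
  decomposition s /\ forall i, indecomposable (summand_mod (s i)).

Definition summand_id (M : rmod) := @Summand M M 1%:M 1%:M.

Definition summand_comp (M : rmod) (x : summand M) (y : summand (summand_mod x)) :=
  @Summand M (summand_mod y) (summand_in y *m summand_in x) (summand_out x *m summand_out y).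

Lemma retract_id (M : rmod) : retract (summand_id M).
Proof. by split; rewrite ?mulmx1 //; apply: hom1. Qed.

Lemma retract_comp (M : rmod) (x : summand M) (y : summand (summand_mod x)) :
  retract x -> retract y -> retract (summand_comp y).
Proof.
case=> hix hox ix [hiy hoy iy]; split => /=; try exact: hom_mul.
by rewrite mulmxA -(mulmxA _ (summand_in x)) ix mulmx1 iy.
Qed.

Lemma indec_decomposition_cat (M : rmod) (x y : summand M) kx ky
    (sx : 'I_kx -> summand (summand_mod x)) (sy : 'I_ky -> summand (summand_mod y)) :
  retract x -> retract y ->
  summand_out x *m summand_in x + summand_out y *m summand_in y = 1%:M ->
  indec_decomposition sx -> indec_decomposition sy ->
  indec_decomposition (fun i => match split i with
                                | inl j => summand_comp (sx j)
                                | inr j => summand_comp (sy j) end).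
Proof.
move=> rx ry xy1 [[rsx sx1] isx] [[rsy sy1] isy].
have sum_comp (z : summand M) k (sz : 'I_k -> summand (summand_mod z)) :
    \sum_(i < k) summand_out (summand_comp (sz i)) *m summand_in (summand_comp (sz i))
    = summand_out z *m (\sum_(i < k) summand_out (sz i) *m summand_in (sz i)) *m summand_in z.
  by rewrite mulmx_sumr mulmx_suml; apply: eq_bigr => i _ /=; rewrite !mulmxA.
split; first split.
- by move=> i; case: (split i) => j; apply: retract_comp.
- rewrite big_split_ord /=.
  under eq_bigr do rewrite (unsplitK (inl _)).
  under [X in _ + X]eq_bigr do rewrite (unsplitK (inr _)).
  by rewrite !sum_comp sx1 sy1 !mulmx1.
- by move=> i; case: (split i) => j /=; [apply: isx | apply: isy].
Qed.

Lemma proj_mx_hom (M : rmod) (U V : 'M_(rdim M)) :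
  submod U -> submod V -> (U :&: V)%MS = 0 -> (1%:M <= U + V)%MS ->
  is_hom (proj_mx U V).
Proof.
move=> sU sV cap0 full a; apply/eqP/mulmxP => u.
rewrite (mulmxA u (ract M a)) (mulmxA u (proj_mx U V)).
have uUV : (u <= U + V)%MS by apply: submx_trans full; apply: submx1.
rewrite -{1}(add_proj_mx cap0 uUV) !mulmxDl.
have w1U : (u *m proj_mx U V *m ract M a <= U)%MS.
  by apply: submx_trans (sU a); apply: submxMr; apply: proj_mx_sub.
have w2V : (u *m proj_mx V U *m ract M a <= V)%MS.
  by apply: submx_trans (sV a); apply: submxMr; apply: proj_mx_sub.
by rewrite (proj_mx_id cap0 w1U) (proj_mx_0 cap0 w2V) addr0.
Qed.

Lemma complement_summands (M : rmod) (U V : 'M_(rdim M)) (sU : submod U) (sV : submod V) :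
  (U :&: V)%MS = 0 -> (1%:M <= U + V)%MS ->
  exists (x y : summand M), [/\ retract x, retract y,
    summand_out x *m summand_in x + summand_out y *m summand_in y = 1%:M,
    rdim (summand_mod x) = \rank U & rdim (summand_mod y) = \rank V].
Proof.
move=> cap0 full.
have cap0' : (V :&: U)%MS = 0 by rewrite capmxC.
have full' : (1%:M <= V + U)%MS by rewrite addsmxC.
have summand_of (W W' : 'M_(rdim M)) (sW : submod W) : submod W' ->
    (W :&: W')%MS = 0 -> (1%:M <= W + W')%MS -> exists x : summand M,
    [/\ retract x, summand_out x *m summand_in x = proj_mx W W' & rdim (summand_mod x) = \rank W].
  move=> sW' c0 f; set B := row_base W.
  have sPW : (proj_mx W W' <= W)%MS by rewrite -[proj_mx W W']mul1mx proj_mx_sub.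
  have [hP PB] := rsub_factor sW (proj_mx_hom sW sW' c0 f) sPW.
  exists (@Summand M (rsub sW) B (proj_mx W W' *m pinvmx B)); split => //.
  split => //=; first exact: rsub_hom.
  by rewrite mulmxA proj_mx_id ?eq_row_base // row_base_pinv.
have [x [rx xP ex]] := summand_of U V sU sV cap0 full.
have [y [ry yP ey]] := summand_of V U sV sU cap0' full'.
exists x, y; split => //; rewrite xP yP.
by rewrite -[proj_mx U V]mul1mx -[proj_mx V U]mul1mx add_proj_mx.
Qed.

Lemma decomposable_split (M : rmod) : ~ indecomposable M -> (0 < rdim M)%N ->
  exists U V : 'M_(rdim M), [/\ submod U, submod V, (U :&: V)%MS = 0,
    (1%:M <= U + V)%MS & U != 0 /\ V != 0].
Proof.
move=> nind M_gt0; apply: NNPP => nUV; apply: nind; split => // U V sU sV full c0.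
case: (eqVneq U 0) => [|nzU]; first by left.
case: (eqVneq V 0) => [|nzV]; first by right.
by case: nUV; exists U, V; split => //; apply/eqP; rewrite -submx0.
Qed.

Lemma indec_decomposition_exists (M : rmod) :
  exists k (s : 'I_k -> summand M), indec_decomposition s.
Proof.
have [n] := ubnP (rdim M); elim: n M => // n IHn M lt_Mn.
case: (posnP (rdim M)) => [M0 | M_gt0].
  exists 0%N, (fun=> summand_id M); split; last by case.
  by split; [case | rewrite big_ord0; symmetry; exact: mx_nrows0].
have [ind | nind] := classic (indecomposable M).
  exists 1%N, (fun=> summand_id M); split => //; split => [_|]; first exact: retract_id.
  by rewrite big_ord1 mulmx1.
have [U [V [sU sV cap0 full [nzU nzV]]]] := decomposable_split nind M_gt0.
have [x [y [rx ry xy1 dx dy]]] := complement_summands sU sV cap0 full.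
have rk : (\rank U + \rank V)%N = rdim M.
  by move: full; rewrite sub1mx /row_full mxrank_disjoint_sum // => /eqP.
have [U_gt0 V_gt0] : (0 < \rank U)%N /\ (0 < \rank V)%N by rewrite !lt0n !mxrank_eq0.
have [kx [sx dsx]] := IHn (summand_mod x) ltac:(rewrite dx; lia).
have [ky [sy dsy]] := IHn (summand_mod y) ltac:(rewrite dy; lia).
by eexists; eexists; apply: indec_decomposition_cat dsx dsy.
Qed.

Lemma epi_uniserial_summand (M Y : rmod) k (s : 'I_k -> summand M) (f : 'M_(rdim M, rdim Y)) :
  decomposition s -> uniserial Y -> (0 < rdim Y)%N -> is_hom f -> row_full f ->
  exists i, row_full (summand_in (s i) *m f).
Proof.
move=> [rs s1] uY Y_gt0 hf ff.
pose F i : 'M_(rdim Y) := <<summand_in (s i) *m f>>%MS.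
have sF i : stable (F i).
  by apply/stable_genmx/stable_img; apply: hom_mul hf; case: (rs i).
have full : row_full (\sum_(i < k) F i)%MS.
  rewrite -sub1mx; apply: submx_trans (submx_full _ ff) _.
  rewrite -[f]mul1mx -s1 mulmx_suml; apply: summx_sub_sums => i _.
  by rewrite genmxE -mulmxA submxMl.
have [i fi] := uniserial_sumsmx_full uY Y_gt0 sF full.
by exists i; move: fi; rewrite /row_full genmxE.
Qed.

Lemma mono_uniserial_summand (M X : rmod) k (s : 'I_k -> summand M) (f : 'M_(rdim X, rdim M)) :
  decomposition s -> uniserial X -> (0 < rdim X)%N -> is_hom f -> row_free f ->
  exists i, row_free (f *m summand_out (s i)).
Proof.
move=> [rs s1] uX X_gt0 hf ff; apply: NNPP => nfree.
pose G i : 'M_(rdim X) := kermx (f *m summand_out (s i)).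
have sG i : stable (G i) by apply/stable_ker; apply: hom_mul hf _; case: (rs i).
have nzG i : G i != 0 by rewrite kermx_eq0; apply/negP => fi; apply: nfree; exists i.
move/negP: (uniserial_bigcapmx_neq0 uX X_gt0 sG nzG); apply.
rewrite -(mulmx_free_eq0 _ ff) -[f]mulmx1 -s1 mulmx_sumr mulmx_sumr big1 // => i _.
have /sub_kermxP Gi0 : ((\bigcap_(j < k) G j)%MS <= G i)%MS by apply: bigcapmx_inf.
by rewrite (mulmxA f) mulmxA Gi0 mul0mx.
Qed.

Lemma indecomposable_split_epi (Q J : rmod) (p : 'M_(rdim Q, rdim J)) (s : 'M_(rdim J, rdim Q)) :
  indecomposable Q -> is_hom p -> is_hom s -> s *m p = 1%:M -> (0 < rdim J)%N -> row_free p.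
Proof.
move=> [_ indQ] hp hs sp J_gt0; rewrite -kermx_eq0.
have cap0 : (<<s>> :&: kermx p <= (0 : 'M_(rdim Q)))%MS.
  apply/rV_subP => v; rewrite sub_capmx genmxE => /andP[/submxP[z ez] /sub_kermxP].
  by rewrite ez -mulmxA sp mulmx1 => ->; rewrite mul0mx sub0mx.
have full : (1%:M <= <<s>> + kermx p)%MS.
  rewrite -[1%:M](subrK (p *m s)) addrC addmx_sub_adds ?genmxE ?submxMl //.
  by apply/sub_kermxP; rewrite mulmxBl mul1mx -mulmxA sp mulmx1 subrr.
case: (indQ _ _ (stable_genmx (stable_img hs)) (stable_ker hp) full cap0) => [|->] //.
move/eqP; rewrite -mxrank_eq0 genmxE mxrank_eq0 => /eqP s0.
by move: (@scalar1_neq0 K _ J_gt0); rewrite -sp s0 mul0mx eqxx.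
Qed.

Lemma indecomposable_split_mono (P Q : rmod) (i : 'M_(rdim P, rdim Q)) (r : 'M_(rdim Q, rdim P)) :
  indecomposable Q -> is_hom i -> is_hom r -> i *m r = 1%:M -> (0 < rdim P)%N -> row_full i.
Proof.
move=> indQ hi hr ir P_gt0; have fr := indecomposable_split_epi indQ hr hi ir P_gt0.
apply/row_fullP; exists r; apply: (row_free_inj fr).
by rewrite -mulmxA ir mulmx1 mul1mx.
Qed.

(** * The regular module and the coinduced module *)

Local Notation dA := (dim A).

Definition rmul_mx (a : A) : 'M[K]_dA := rowfun_mx (fun u => v2r (r2v u * a)).
Definition lmul_mx (a : A) : 'M[K]_dA := rowfun_mx (fun u => v2r (a * r2v u)).

Lemma rmul_mxE a u : u *m rmul_mx a = v2r (r2v u * a).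
Proof.
by apply: mul_rowfun_mx => k x y; rewrite linearD linearZ /= mulrDl -scalerAl linearD linearZ.
Qed.

Lemma lmul_mxE a u : u *m lmul_mx a = v2r (a * r2v u).
Proof.
by apply: mul_rowfun_mx => k x y; rewrite linearD linearZ /= mulrDr -scalerAr linearD linearZ.
Qed.

Definition regular : rmod.
Proof.
refine (@RMod _ _ dA rmul_mx _ _ _).
- move=> k a b; apply/eqP/mulmxP => u.
  by rewrite mulmxDr -scalemxAr !rmul_mxE mulrDr -scalerAr linearD linearZ.
- by apply/eqP/mulmxP => u; rewrite rmul_mxE mulr1 r2vK mulmx1.
- by move=> a b; apply/eqP/mulmxP => u; rewrite mulmxA !rmul_mxE v2rK mulrA.
Defined.

Definition cyclic_hom (N : rmod) (n : 'rV_(rdim N)) : 'M[K]_(dA, rdim N) :=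
  rowfun_mx (fun u => n *m ract N (r2v u)).

Lemma cyclic_homE (N : rmod) n u : u *m cyclic_hom n = n *m ract N (r2v u).
Proof.
by apply: mul_rowfun_mx => k x y; rewrite linearD linearZ /= ract_lin mulmxDr scalemxAr.
Qed.

Lemma cyclic_hom1 (N : rmod) (n : 'rV_(rdim N)) : v2r 1 *m cyclic_hom n = n.
Proof. by rewrite cyclic_homE v2rK ract1 mulmx1. Qed.

Lemma cyclic_hom_lin (N : rmod) : linear (@cyclic_hom N).
Proof.
by move=> k x y; apply/eqP/mulmxP => u; rewrite mulmxDr -scalemxAr !cyclic_homE mulmxDl scalemxAl.
Qed.

Lemma cyclic_hom_is_hom (N : rmod) n :
  is_hom (M := regular) (cyclic_hom n : 'M_(rdim regular, rdim N)).
Proof.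
move=> a; apply/eqP/mulmxP => u; rewrite !mulmxA /= rmul_mxE !cyclic_homE v2rK ractM.
by rewrite mulmxA.
Qed.

Lemma cyclic_hom_ract (N : rmod) n a : cyclic_hom (n *m ract N a) = lmul_mx a *m cyclic_hom n.
Proof. by apply/eqP/mulmxP => u; rewrite mulmxA lmul_mxE !cyclic_homE v2rK ractM mulmxA. Qed.

Lemma cyclic_homM (N L : rmod) n (g : 'M_(rdim N, rdim L)) :
  is_hom g -> cyclic_hom (n *m g) = cyclic_hom n *m g.
Proof. by move=> hg; apply/eqP/mulmxP => u; rewrite mulmxA !cyclic_homE -mulmxA -hg mulmxA. Qed.

Lemma regular_projective : projective_mod regular.
Proof.
move=> N L g f hg fg hf; set n := v2r 1 *m f *m pinvmx g.
have ng : n *m g = v2r 1 *m f by rewrite mulmxKpV // submx_full.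
exists (cyclic_hom n); split; first exact: cyclic_hom_is_hom.
apply/eqP/mulmxP => u; rewrite mulmxA cyclic_homE -mulmxA hg mulmxA ng -mulmxA.
by rewrite -(hf (@r2v _ A u)) mulmxA /= rmul_mxE v2rK mul1r r2vK.
Qed.

Lemma uniserial_cyclic (E : rmod) : uniserial E -> (0 < rdim E)%N ->
  exists n : 'rV_(rdim E), row_full (cyclic_hom n).
Proof.
move=> uE E_gt0; pose F j : 'M_(rdim E) := <<cyclic_hom (delta_mx 0 j)>>%MS.
have sF j : stable (F j) by apply/stable_genmx; exact: (stable_img (cyclic_hom_is_hom _)).
have full : row_full (\sum_j F j)%MS.
  rewrite -sub1mx; apply/row_subP => j; rewrite row1 (sumsmx_sup j) // genmxE.
  by rewrite -[X in (X <= _)%MS]cyclic_hom1 submxMl.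
have [j fj] := uniserial_sumsmx_full uE E_gt0 sF full.
by exists (delta_mx 0 j); move: fj; rewrite /row_full genmxE.
Qed.

Lemma regular_summand_epi k (s : 'I_k -> summand regular) (E : rmod) :
  decomposition s -> uniserial E -> (0 < rdim E)%N ->
  exists i (p : 'M_(rdim (summand_mod (s i)), rdim E)), is_hom p /\ row_full p.
Proof.
move=> ds uE E_gt0; have [n fn] := uniserial_cyclic uE E_gt0.
have [i fi] := epi_uniserial_summand ds uE E_gt0 (cyclic_hom_is_hom n) fn.
exists i, (summand_in (s i) *m cyclic_hom n); split => //.
by case: (ds.1 i) => hi _ _; exact: hom_mul hi (cyclic_hom_is_hom n).
Qed.

Lemma indec_projective_epi (E : rmod) : uniserial E -> (0 < rdim E)%N ->
  exists (Q : rmod) (p : 'M_(rdim Q, rdim E)),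
    [/\ indecomposable Q, projective_mod Q, is_hom p & row_full p].
Proof.
move=> uE E_gt0; have [k [s [ds inds]]] := indec_decomposition_exists regular.
have [i [p [hp fp]]] := regular_summand_epi ds uE E_gt0.
exists (summand_mod (s i)), p; split => //.
by case: (ds.1 i) => hi ho io; apply: projective_retract hi ho io regular_projective.
Qed.

Lemma lmul_mx_lin k a b : lmul_mx (k *: a + b) = k *: lmul_mx a + lmul_mx b.
Proof.
by apply/eqP/mulmxP => u; rewrite mulmxDr -scalemxAr !lmul_mxE mulrDl -scalerAl linearD linearZ.
Qed.

Lemma lmul_mx1 : lmul_mx 1 = 1%:M.
Proof. by apply/eqP/mulmxP => u; rewrite lmul_mxE mul1r r2vK mulmx1. Qed.

Lemma lmul_mxM a b : lmul_mx (a * b) = lmul_mx b *m lmul_mx a.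
Proof. by apply/eqP/mulmxP => u; rewrite mulmxA !lmul_mxE v2rK mulrA. Qed.

Section Coinduced.
Variable M : rmod.
Local Notation m := (rdim M).

(* [coinduced] is Hom_K(A, M) with (phi . a)(x) = phi (a x); a K-linear map
   A -> M is stored as its dim A x m matrix acting on row vectors, flattened
   by mxvec. *)
Definition coind_act (a : A) : 'M[K]_(dA * m) :=
  rowfun_mx (fun u => mxvec (lmul_mx a *m vec_mx u)).

Lemma coind_actE a u : u *m coind_act a = mxvec (lmul_mx a *m vec_mx u).
Proof. by apply: mul_rowfun_mx => k x y; rewrite !linearP. Qed.

Definition coinduced : rmod.
Proof.
refine (@RMod _ _ (dA * m) coind_act _ _ _).
- move=> k a b; apply/eqP/mulmxP => u.
  by rewrite mulmxDr -scalemxAr !coind_actE lmul_mx_lin mulmxDl -scalemxAl linearP.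
- by apply/eqP/mulmxP => u; rewrite coind_actE lmul_mx1 mul1mx vec_mxK mulmx1.
- move=> a b; apply/eqP/mulmxP => u.
  by rewrite mulmxA !coind_actE mxvecK lmul_mxM mulmxA.
Defined.

(* The A-homomorphism N -> Hom_K(A, M) adjoint to the K-linear map l. *)
Definition coind_hom (N : rmod) (l : 'M[K]_(rdim N, m)) : 'M[K]_(rdim N, dA * m) :=
  rowfun_mx (fun n => mxvec (cyclic_hom n *m l)).

Definition coind_eval : 'M[K]_(dA * m, m) := rowfun_mx (fun u => v2r 1 *m vec_mx u).

Lemma coind_homE (N : rmod) (l : 'M_(rdim N, m)) n :
  n *m coind_hom l = mxvec (cyclic_hom n *m l).
Proof.
by apply: mul_rowfun_mx => k x y; rewrite cyclic_hom_lin mulmxDl -scalemxAl linearP.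
Qed.

Lemma coind_evalE u : u *m coind_eval = v2r 1 *m vec_mx u.
Proof. by apply: mul_rowfun_mx => k x y; rewrite linearP mulmxDr scalemxAr. Qed.

Lemma coind_hom_is_hom (N : rmod) (l : 'M_(rdim N, m)) :
  is_hom (N := coinduced) (coind_hom l).
Proof.
move=> a; apply/eqP/mulmxP => n; rewrite !mulmxA !coind_homE /= coind_actE mxvecK.
by rewrite cyclic_hom_ract mulmxA.
Qed.

Lemma coind_homM (X N : rmod) (g : 'M_(rdim X, rdim N)) (l : 'M_(rdim N, m)) :
  is_hom g -> g *m coind_hom l = coind_hom (g *m l).
Proof. by move=> hg; apply/eqP/mulmxP => x; rewrite mulmxA !coind_homE cyclic_homM ?mulmxA. Qed.

Lemma coind_hom_eval (N : rmod) (l : 'M_(rdim N, m)) : coind_hom l *m coind_eval = l.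
Proof.
by apply/eqP/mulmxP => n; rewrite mulmxA coind_homE coind_evalE mxvecK mulmxA cyclic_hom1.
Qed.

Lemma coind_eval_hom (X : rmod) (f : 'M_(rdim X, rdim coinduced)) :
  is_hom f -> coind_hom (f *m coind_eval) = f.
Proof.
move=> hf; apply/eqP/mulmxP => x; rewrite coind_homE -[x *m f]vec_mxK; congr mxvec.
apply/eqP/mulmxP => v; rewrite !mulmxA cyclic_homE -(mulmxA x) hf mulmxA coind_evalE.
by rewrite /= coind_actE mxvecK mulmxA lmul_mxE v2rK mulr1 r2vK.
Qed.

Lemma coinduced_injective : injective_mod coinduced.
Proof.
move=> L N g f hg fg hf; have [g' gg'] := row_freeP fg.
exists (coind_hom (g' *m (f *m coind_eval))); split; first exact: coind_hom_is_hom.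
by rewrite coind_homM // mulmxA gg' mul1mx coind_eval_hom.
Qed.

Lemma coind_unit_free : row_free (coind_hom (1%:M : 'M_m)).
Proof. by apply/row_freeP; exists coind_eval; rewrite coind_hom_eval. Qed.

End Coinduced.

Lemma indec_injective_mono (X : rmod) : uniserial X -> (0 < rdim X)%N ->
  exists (E : rmod) (j : 'M_(rdim X, rdim E)),
    [/\ indecomposable E, injective_mod E, is_hom j & row_free j].
Proof.
move=> uX X_gt0; have [k [s [ds inds]]] := indec_decomposition_exists (coinduced X).
have [i fi] := mono_uniserial_summand ds uX X_gt0 (coind_hom_is_hom _) (coind_unit_free X).
case: (ds.1 i) => hin hout io.
exists (summand_mod (s i)), (coind_hom 1%:M *m summand_out (s i)); split => //.
- exact: injective_retract hin hout io (@coinduced_injective X).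
- exact: hom_mul (coind_hom_is_hom _) hout.
Qed.

(** * Short exact sequences and resolutions of length one *)

Definition ses (P Q J : rmod) (i : 'M_(rdim P, rdim Q)) (p : 'M_(rdim Q, rdim J)) :=
  [/\ is_hom i, is_hom p, row_free i, row_full p & (kermx p == i)%MS].

Lemma ses_mul0 (P Q J : rmod) (i : 'M_(rdim P, rdim Q)) (p : 'M_(rdim Q, rdim J)) :
  ses i p -> i *m p = 0.
Proof. by case=> _ _ _ _ /andP[_ /sub_kermxP]. Qed.

Lemma ses_rdim (P Q J : rmod) (i : 'M_(rdim P, rdim Q)) (p : 'M_(rdim Q, rdim J)) :
  ses i p -> rdim Q = (rdim P + rdim J)%N.
Proof.
case=> _ _ fi fp /eqmxP kp; have := mxrank_ker p.
by rewrite kp (eqP fi) (eqP fp) => ->; rewrite subnK // (row_full_geq fp).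
Qed.

Definition rseq2 (X Y : rmod) (n : nat) : rmod :=
  match n with 0 => X | 1 => Y | _ => rzero end.

Lemma id_le0P (M : rmod) : id_le M 0 <-> injective_mod M.
Proof.
split=> [[I [d [e [iI _ [he fe /andP[_ ke]] _ I1]]]] | iM].
  rewrite (mx_ncols0 (d 0%N) I1) kermx0 sub1mx in ke.
  have [g [eg ge]] := row_free_invertible fe (row_full_geq ke).
  exact: injective_retract he (hom_inv he eg ge) eg (iI 0%N).
exists (rseq2 M rzero), (fun=> 0), 1%:M; split => //.
- by case=> [|[|n]] //=; apply: injective_rzero.
- by move=> n; apply: hom0.
- by split; [exact: hom1 | rewrite /row_free mxrank1 | rewrite kermx0 !submx1].
- by case=> [|n]; apply: eqmx_ncols0.
Qed.

Lemma pd_le0P (M : rmod) : pd_le M 0 <-> projective_mod M.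
Proof.
split=> [[P [d [e [pP _ [he fe /andP[ke _]] _ P1]]]] | pM].
  rewrite (mx_nrows0 (d 0%N) P1) in ke.
  have /eqP := submx0null ke; rewrite kermx_eq0 => fre.
  have [g [eg ge]] := row_free_invertible fre (row_full_geq fe).
  exact: projective_retract (hom_inv he eg ge) he ge (pP 0%N).
exists (rseq2 M rzero), (fun=> 0), 1%:M; split => //.
- by case=> [|[|n]] //=; apply: projective_rzero.
- by move=> n; apply: hom0.
- split; [exact: hom1 | by rewrite /row_full mxrank1 |].
  have /eqP -> : kermx (1%:M : 'M[K]_(rdim M)) == 0 by rewrite kermx_eq0 /row_free mxrank1.
  by rewrite !sub0mx.
- by case=> [|n]; apply: eqmx_ncols0.
Qed.

Lemma id_le1P (P : rmod) : id_le P 1 <->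
  exists (I0 I1 : rmod) (e : 'M_(rdim P, rdim I0)) (d : 'M_(rdim I0, rdim I1)),
    [/\ ses e d, injective_mod I0 & injective_mod I1].
Proof.
split=> [[I [d [e [iI hd [he fe ke] ex I2]]]] | [I0 [I1 [e [d [[he hd fe fd ke] iI0 iI1]]]]]].
  exists (I 0%N), (I 1%N), e, (d 0%N); split => //; split; rewrite 1?andbC //.
  have /andP[_] := ex 0%N; rewrite (mx_ncols0 (d 1%N) I2) kermx0.
  by rewrite sub1mx.
exists (rseq2 I0 I1), (fun n => match n return
  'M_(rdim (rseq2 I0 I1 n), rdim (rseq2 I0 I1 n.+1)) with 0 => d | _ => 0 end), e.
split => //.
- by case=> [|[|n]] //=; apply: injective_rzero.
- by case=> [|n]; [exact: hd | exact: hom0].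
- by split; rewrite 1?andbC.
- case=> [|n] /=; last exact: eqmx_ncols0.
  by apply/andP; split; [apply/sub_kermxP; rewrite mulmx0 | apply: submx_full].
Qed.

Lemma pd_le1P (J : rmod) : pd_le J 1 <->
  exists (P1 P0 : rmod) (d : 'M_(rdim P1, rdim P0)) (e : 'M_(rdim P0, rdim J)),
    [/\ ses d e, projective_mod P1 & projective_mod P0].
Proof.
split=> [[P [d [e [pP hd [he fe ke] ex P2]]]] | [P1 [P0 [d [e [[hd he fd fe ke] pP1 pP0]]]]]].
  exists (P 1%N), (P 0%N), (d 0%N), e; split => //; split => //.
  have /andP[+ _] := ex 0%N; rewrite (mx_nrows0 (d 1%N) P2) => /submx0null/eqP.
  by rewrite kermx_eq0.
exists (rseq2 P0 P1), (fun n => match n return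
  'M_(rdim (rseq2 P0 P1 n.+1), rdim (rseq2 P0 P1 n)) with 0 => d | _ => 0 end), e.
split => //.
- by case=> [|[|n]] //=; apply: projective_rzero.
- by case=> [|n]; [exact: hd | exact: hom0].
- case=> [|n] /=; last exact: eqmx_ncols0.
  by move: fd; rewrite -kermx_eq0 => /eqP ->; rewrite !sub0mx.
Qed.

Lemma uniserial_injective_summand (P Q I : rmod)
    (j : 'M_(rdim P, rdim Q)) (e : 'M_(rdim P, rdim I)) :
  uniserial Q -> injective_mod Q -> injective_mod I -> (0 < rdim P)%N ->
  is_hom j -> row_free j -> is_hom e -> row_free e ->
  exists (a : 'M_(rdim Q, rdim I)) (u : 'M_(rdim I, rdim Q)),
    [/\ is_hom a, is_hom u, j *m a = e, e *m u = j & a *m u = 1%:M].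
Proof.
move=> uQ iQ iI P_gt0 hj fj he fe.
have [a [ha ja]] := iI P Q j e hj fj he.
have [b [hb eb]] := iQ P I e j he fe hj.
have hab := hom_mul ha hb.
have jab : j *m (a *m b) = j by rewrite mulmxA ja eb.
have fab : row_free (a *m b) by apply: (uniserial_mono_ext uQ hj hab fj P_gt0); rewrite jab.
have [g [abg gab]] := row_free_invertible fab (leqnn _).
exists a, (b *m g); split; rewrite ?mulmxA //.
- exact: hom_mul hb (hom_inv hab abg gab).
- by rewrite eb -{1}jab -mulmxA abg mulmx1.
Qed.

Lemma uniserial_projective_summand (Q J P : rmod)
    (p : 'M_(rdim Q, rdim J)) (e : 'M_(rdim P, rdim J)) :
  uniserial Q -> projective_mod Q -> projective_mod P -> (0 < rdim J)%N ->
  is_hom p -> row_full p -> is_hom e -> row_full e ->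
  exists (a : 'M_(rdim Q, rdim P)) (u : 'M_(rdim P, rdim Q)),
    [/\ is_hom a, is_hom u, a *m e = p, u *m p = e & a *m u = 1%:M].
Proof.
move=> uQ pQ pP J_gt0 hp fp he fe.
have [a [ha ae]] := pQ P J e p he fe hp.
have [b [hb bp]] := pP Q J p e hp fp he.
have hab := hom_mul ha hb.
have abp : a *m b *m p = p by rewrite -mulmxA bp ae.
have fab : row_full (a *m b) := uniserial_epi_lift uQ J_gt0 hp fp hab fp abp.
have [g [abg gab]] := row_full_invertible fab (leqnn _).
have gp : g *m p = p by rewrite -{1}abp mulmxA gab mul1mx.
exists a, (b *m g); split; rewrite ?mulmxA //.
- exact: hom_mul hb (hom_inv hab abg gab).
- by rewrite -mulmxA gp bp.
Qed.

(* If Q is a direct summand of I0 containing the image of P, then Q/P is a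
   direct summand of I0/P = I1. *)
Lemma quotient_summand (P Q I0 I1 : rmod) (j : 'M_(rdim P, rdim Q)) (e : 'M_(rdim P, rdim I0))
    (d : 'M_(rdim I0, rdim I1)) (a : 'M_(rdim Q, rdim I0)) (u : 'M_(rdim I0, rdim Q)) :
  ses e d -> is_hom j -> row_free j -> is_hom a -> is_hom u ->
  j *m a = e -> e *m u = j -> a *m u = 1%:M ->
  exists (J : rmod) (p : 'M_(rdim Q, rdim J)) (s : 'M_(rdim J, rdim I1)) (r : 'M_(rdim I1, rdim J)),
    [/\ ses j p, is_hom s, is_hom r & s *m r = 1%:M].
Proof.
move=> sed hj fj ha hu ja eu au; case: (sed) => he hd fe fd /andP[kd _].
have had := hom_mul ha hd.
have sU : submod <<a *m d>>%MS := stable_genmx (stable_img had).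
have [hp ps] : is_hom (a *m d *m pinvmx (row_base <<a *m d>>%MS) : 'M_(_, rdim (rsub sU)))
    /\ a *m d *m pinvmx (row_base <<a *m d>>%MS) *m row_base <<a *m d>>%MS = a *m d.
  by apply: rsub_factor had _; rewrite genmxE.
set s := row_base <<a *m d>>%MS in ps; set p := _ *m pinvmx s in hp ps.
have fs : row_free s := row_base_free _.
have fp : row_full p by rewrite /row_full -(mxrankMfree _ fs) ps /= genmxE.
have jp : j *m p = 0.
  by apply/eqP; rewrite -(mulmx_free_eq0 _ fs) -mulmxA ps mulmxA ja (ses_mul0 sed).
have kp : (kermx p <= j)%MS.
  have /submxP[W eW] : (kermx p *m a <= e)%MS.
    apply: submx_trans kd; apply/sub_kermxP.
    by move: (congr1 (mulmx^~ s) (mulmx_ker p)); rewrite mul0mx -mulmxA ps mulmxA.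
  have -> : kermx p = W *m j by rewrite -[kermx p]mulmx1 -au mulmxA eW -eu mulmxA.
  exact: submxMl.
have [r [hr dr]] : exists r : 'M_(rdim I1, rdim (rsub sU)), is_hom r /\ d *m r = u *m p.
  apply: factor_epi hd fd (hom_mul hu hp) _.
  by have /submxP[W ->] := kd; rewrite -!mulmxA (mulmxA e) eu jp mulmx0.
exists (rsub sU), p, s, r; split => //; first by split => //; rewrite kp; apply/sub_kermxP.
  exact: rsub_hom.
apply: (row_full_inj fp); rewrite mulmxA ps -mulmxA dr mulmxA au mul1mx.
by rewrite mulmx1.
Qed.

(* Dually, the kernel of Q -> J is a direct summand of the kernel P1 of P0 -> J. *)
Lemma kernel_summand (P1 P0 Q J : rmod) (d : 'M_(rdim P1, rdim P0)) (e : 'M_(rdim P0, rdim J))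
    (p : 'M_(rdim Q, rdim J)) (a : 'M_(rdim Q, rdim P0)) (u : 'M_(rdim P0, rdim Q)) :
  ses d e -> is_hom p -> row_full p -> is_hom a -> is_hom u ->
  a *m e = p -> u *m p = e -> a *m u = 1%:M ->
  exists (P : rmod) (i : 'M_(rdim P, rdim Q)) (s : 'M_(rdim P, rdim P1)) (r : 'M_(rdim P1, rdim P)),
    [/\ ses i p, is_hom s, is_hom r & s *m r = 1%:M].
Proof.
move=> sde hp fp ha hu ae up au; case: (sde) => hd he fd fe /andP[ke _].
have sK : submod (kermx p) := stable_ker hp.
set i := row_base (kermx p).
have hi : is_hom (i : 'M_(rdim (rsub sK), rdim Q)) := rsub_hom sK.
have fi : row_free i := row_base_free _.
have kpi : (kermx p <= i)%MS by rewrite /i eq_row_base.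
have ip : i *m p = 0 by apply/sub_kermxP; rewrite /i eq_row_base.
have [s [hs sd]] : exists s : 'M_(rdim (rsub sK), rdim P1), is_hom s /\ s *m d = i *m a.
  apply: lift_mono (hom_mul hi ha) hd fd _; apply: submx_trans ke.
  by apply/sub_kermxP; rewrite -mulmxA ae.
have [r [hr ri]] : exists r : 'M_(rdim P1, rdim (rsub sK)), is_hom r /\ r *m i = d *m u.
  apply: lift_mono (hom_mul hd hu) hi fi _; apply: submx_trans kpi.
  by apply/sub_kermxP; rewrite -mulmxA up (ses_mul0 sde).
exists (rsub sK), i, s, r; split => //; first by split => //; rewrite kpi; apply/sub_kermxP.
apply: (row_free_inj fi); rewrite -mulmxA ri mulmxA sd -mulmxA au mulmx1.
by rewrite mul1mx.
Qed.

Lemma ses_iso_ker (P Q J P' Q' J' : rmod) (i : 'M_(rdim P, rdim Q)) (p : 'M_(rdim Q, rdim J))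
    (i' : 'M_(rdim P', rdim Q')) (p' : 'M_(rdim Q', rdim J'))
    (psi : 'M_(rdim Q, rdim Q')) (psi' : 'M_(rdim Q', rdim Q)) :
  ses i p -> ses i' p' -> is_hom psi -> psi *m psi' = 1%:M -> psi' *m psi = 1%:M ->
  i *m psi *m p' = 0 -> i' *m psi' *m p = 0 -> iso P P'.
Proof.
move=> [hi _ fi _ /andP[ki _]] [hi' _ fi' _ /andP[ki' _]] hpsi pp' p'p c c'.
have hpsi' := hom_inv hpsi pp' p'p.
have [s [hs si]] : exists s, is_hom s /\ s *m i' = i *m psi.
  by apply: lift_mono (hom_mul hi hpsi) hi' fi' _; apply: submx_trans ki'; apply/sub_kermxP.
have [s' [hs' si']] : exists s', is_hom s' /\ s' *m i = i' *m psi'.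
  by apply: lift_mono (hom_mul hi' hpsi') hi fi _; apply: submx_trans ki; apply/sub_kermxP.
exists s, s'; split => //.
  by apply: (row_free_inj fi); rewrite -mulmxA si' mulmxA si -mulmxA pp' mulmx1 mul1mx.
by apply: (row_free_inj fi'); rewrite -mulmxA si mulmxA si' -mulmxA p'p mulmx1 mul1mx.
Qed.

Lemma ses_iso_coker (P Q J P' Q' J' : rmod) (i : 'M_(rdim P, rdim Q)) (p : 'M_(rdim Q, rdim J))
    (i' : 'M_(rdim P', rdim Q')) (p' : 'M_(rdim Q', rdim J'))
    (psi : 'M_(rdim Q, rdim Q')) (psi' : 'M_(rdim Q', rdim Q)) :
  ses i p -> ses i' p' -> is_hom psi -> psi *m psi' = 1%:M -> psi' *m psi = 1%:M ->
  i *m psi *m p' = 0 -> i' *m psi' *m p = 0 -> iso J J'.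
Proof.
move=> [_ hp _ fp /andP[ki _]] [_ hp' _ fp' /andP[ki' _]] hpsi pp' p'p c c'.
have hpsi' := hom_inv hpsi pp' p'p.
have [t [ht pt]] : exists t, is_hom t /\ p *m t = psi *m p'.
  apply: factor_epi hp fp (hom_mul hpsi hp') _.
  by have /submxP[W ->] := ki; rewrite -!mulmxA (mulmxA i) c mulmx0.
have [t' [ht' pt']] : exists t', is_hom t' /\ p' *m t' = psi' *m p.
  apply: factor_epi hp' fp' (hom_mul hpsi' hp) _.
  by have /submxP[W ->] := ki'; rewrite -!mulmxA (mulmxA i') c' mulmx0.
exists t, t'; split => //.
  apply: (row_full_inj fp); rewrite mulmxA pt -mulmxA pt' mulmxA pp' mul1mx.
  by rewrite mulmx1.
apply: (row_full_inj fp'); rewrite mulmxA pt' -mulmxA pt mulmxA p'p mul1mx.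
by rewrite mulmx1.
Qed.

(** * Counting isomorphism classes *)

Lemma num_iso_classes_add (S : rmod -> Prop) (M0 : rmod) n :
  S M0 -> num_iso_classes (fun M => S M /\ ~ iso M M0) n -> num_iso_classes S n.+1.
Proof.
move=> SM0 [s [Ss sinj scov]].
exists (fun i => if unlift ord_max i is Some j then s j else M0); split.
- by move=> i; case: (unliftP ord_max i) => [j _|_]; [exact: (Ss j).1 | exact: SM0].
- move=> i j; case: (unliftP ord_max i) => [i' ->|->];
    case: (unliftP ord_max j) => [j' ->|->] //.
  + by move/sinj ->.
  + by move=> isoij; case: (Ss i').2.
  + by move=> isoij; case: (Ss j').2; apply: iso_sym.
- move=> M SM; have [iM | niM] := classic (iso M M0).
    by exists ord_max; rewrite unlift_none.
  by have [j ij] := scov M (conj SM niM); exists (lift ord_max j); rewrite liftK.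
Qed.

Lemma num_iso_classes_of_cover r (S : rmod -> Prop) (L : 'I_r -> rmod) :
  (forall M, S M -> exists k, iso M (L k)) -> exists n, num_iso_classes S n.
Proof.
elim: r S L => [|r IHr] S L HL.
  by exists 0%N, L; split => [[] | [] | M /HL[[]]].
have [[M0 [SM0 iM0]] | nM0] := classic (exists M0, S M0 /\ iso M0 (L ord_max)).
  have [n classes] : exists n, num_iso_classes (fun M => S M /\ ~ iso M M0) n.
    apply: (IHr _ (fun k => L (lift ord_max k))) => M [SM niM].
    have [k ik] := HL M SM; case: (unliftP ord_max k) ik => [j -> ik | -> ik].
      by exists j.
    by case: niM; apply: iso_trans ik (iso_sym iM0).
  by exists n.+1; apply: num_iso_classes_add SM0 classes.
apply: (IHr _ (fun k => L (lift ord_max k))) => M SM.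
have [k ik] := HL M SM; case: (unliftP ord_max k) ik => [j -> ik | -> ik].
  by exists j.
by case: nM0; exists M.
Qed.

Lemma num_iso_classes_transfer (S T : rmod -> Prop) (R : rmod -> rmod -> Prop) n :
  (forall P, S P -> exists J, T J /\ R P J) ->
  (forall J, T J -> exists P, S P /\ R P J) ->
  (forall P J P' J', R P J -> R P' J' -> iso P P' -> iso J J') ->
  (forall P J P' J', R P J -> R P' J' -> iso J J' -> iso P P') ->
  num_iso_classes S n -> num_iso_classes T n.
Proof.
move=> ST TS isoST isoTS [s [Ss sinj scov]].
have img i : {J | T J /\ R (s i) J} by apply: constructive_indefinite_description; apply: ST.
exists (fun i => sval (img i)); split.
- by move=> i; case: (svalP (img i)).
- move=> i j ij; apply: sinj.
  exact: isoTS (svalP (img i)).2 (svalP (img j)).2 ij.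
- move=> J TJ; have [P [SP RPJ]] := TS J TJ; have [k ik] := scov P SP.
  by exists k; apply: isoST RPJ (svalP (img k)).2 ik.
Qed.

Lemma uniserial_projective_classes_finite : exists r (L : 'I_r -> rmod),
  forall P, uniserial P -> (0 < rdim P)%N -> projective_mod P -> exists k, iso P (L k).
Proof.
have [r [s [ds inds]]] := indec_decomposition_exists regular.
exists r, (fun k => summand_mod (s k)) => P uP P_gt0 pP.
have [k [p [hp fp]]] := regular_summand_epi ds uP P_gt0.
have [t [ht tp]] := pP _ P p 1%:M hp fp (hom1 P).
have fp' := indecomposable_split_epi (inds k) hp ht tp P_gt0.
have [q [pq qp]] := row_free_invertible fp' (row_full_geq fp).
by exists k, q, p; split => //; exact: hom_inv hp pq qp.
Qed.

(** * The correspondence P |-> Q/P *)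

Definition linked (P J : rmod) :=
  exists (Q : rmod) (i : 'M_(rdim P, rdim Q)) (p : 'M_(rdim Q, rdim J)),
    [/\ indecomposable Q, projective_mod Q, injective_mod Q, ses i p &
        (0 < rdim P)%N && (0 < rdim J)%N].

Lemma linked_inj_dim1 (P J : rmod) : linked P J -> injective_mod J -> inj_dim_eq P 1.
Proof.
case=> Q [i [p [indQ _ iQ sip /andP[P_gt0 J_gt0]]]] iJ.
split; first by apply/id_le1P; exists Q, J, i, p.
case=> // _ /id_le0P iP; case: (sip) => hi _ fi _ _.
have [r [hr ir]] := iP P Q i 1%:M hi fi (hom1 P).
have := row_full_geq (indecomposable_split_mono indQ hi hr ir P_gt0).
by rewrite (ses_rdim sip); lia.
Qed.

Lemma linked_proj_dim1 (P J : rmod) : linked P J -> projective_mod P -> proj_dim_eq J 1.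
Proof.
case=> Q [i [p [indQ pQ _ sip /andP[P_gt0 J_gt0]]]] pP.
split; first by apply/pd_le1P; exists P, Q, i, p.
case=> // _ /pd_le0P pJ; case: (sip) => _ hp _ fp _.
have [s [hs sp]] := pJ Q J p 1%:M hp fp (hom1 J).
have := row_free_leq (indecomposable_split_epi indQ hp hs sp J_gt0).
by rewrite (ses_rdim sip); lia.
Qed.

Definition proj_id1 (P : rmod) := [/\ indecomposable P, projective_mod P & inj_dim_eq P 1].
Definition inj_pd1 (J : rmod) := [/\ indecomposable J, injective_mod J & proj_dim_eq J 1].

Section Nakayama.
Hypothesis nak : nakayama A.

(* Nakayama algebras are QF-3.  For Q of maximal dimension, embed Q into an
   indecomposable injective E and lift along an indecomposable projective
   Q' -> E: maximality forces the resulting mono Q -> Q' to be onto, so Q is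
   isomorphic to E. *)
Lemma projective_mono_projinj (P : rmod) : indecomposable P -> projective_mod P ->
  exists (Q : rmod) (j : 'M_(rdim P, rdim Q)),
    [/\ indecomposable Q, projective_mod Q, injective_mod Q, is_hom j & row_free j].
Proof.
move=> indP pP; have P_gt0 := indP.1.
pose cand n := exists (Q : rmod) (j : 'M_(rdim P, rdim Q)),
  [/\ indecomposable Q, projective_mod Q, is_hom j, row_free j & rdim Q = n].
have ub n : cand n -> (n <= rdim (coinduced P))%N.
  case=> Q [j [indQ _ hj fj <-]].
  have [a [ha ja]] := coinduced_injective hj fj (coind_hom_is_hom (M := P) (N := P) 1%:M).
  apply: (row_free_leq (f := a)); apply: (uniserial_mono_ext (nak indQ) hj ha fj P_gt0).
  by rewrite ja; apply: coind_unit_free.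
have cP : cand (rdim P).
  by exists P, 1%:M; split => //; [exact: hom1 | rewrite /row_free mxrank1].
have [_ [[Q [j [indQ pQ hj fj <-]]] maxQ]] := ex_max_bounded (ex_intro _ _ cP) ub.
have [E [k [indE iE hk fk]]] := indec_injective_mono (nak indQ) indQ.1.
have [Q' [q [indQ' pQ' hq fq]]] := indec_projective_epi (nak indE) indE.1.
have [h [hh hqk]] := pQ Q' E q k hq fq hk.
have fh : row_free h by apply: (@row_free_mulmxl _ _ _ _ h q); rewrite hqk.
have le : (rdim Q' <= rdim Q)%N.
  by apply: maxQ; exists Q', (j *m h); split => //; [exact: hom_mul | exact: row_freeM].
have [h' [_ h'h]] := row_free_invertible fh le.
have fk' : row_full k by rewrite -hqk; apply: row_fullM fq; apply/row_fullP; exists h'.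
have [k' [kk' k'k]] := row_free_invertible fk (row_full_geq fk').
by exists Q, j; split => //; exact: injective_retract hk (hom_inv hk kk' k'k) kk' iE.
Qed.

Lemma injective_epi_projinj (J : rmod) : indecomposable J -> injective_mod J ->
  exists (Q : rmod) (p : 'M_(rdim Q, rdim J)),
    [/\ indecomposable Q, projective_mod Q, injective_mod Q, is_hom p & row_full p].
Proof.
move=> indJ iJ; have J_gt0 := indJ.1.
have [Q0 [c [_ pQ0 hc fc]]] := indec_projective_epi (nak indJ) J_gt0.
pose cand n := exists (E : rmod) (q : 'M_(rdim E, rdim J)),
  [/\ indecomposable E, injective_mod E, is_hom q, row_full q & rdim E = n].
have ub n : cand n -> (n <= rdim Q0)%N.
  case=> E [q [indE _ hq fq <-]]; have [l [hl lq]] := pQ0 E J q c hq fq hc.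
  exact: row_full_geq (uniserial_epi_lift (nak indE) J_gt0 hq fq hl fc lq).
have cJ : cand (rdim J).
  by exists J, 1%:M; split => //; [exact: hom1 | rewrite /row_full mxrank1].
have [_ [[E [q [indE iE hq fq <-]]] maxE]] := ex_max_bounded (ex_intro _ _ cJ) ub.
have [Q [c' [indQ pQ hc' fc']]] := indec_projective_epi (nak indE) indE.1.
have [E' [k [indE' iE' hk fk]]] := indec_injective_mono (nak indQ) indQ.1.
have [mu [hmu kmu]] := iE Q E' k c' hk fk hc'.
have fmu : row_full mu by apply: (@row_full_mulmxr _ _ _ _ k mu); rewrite kmu.
have le : (rdim E' <= rdim E)%N.
  by apply: maxE; exists E', (mu *m q); split => //; [exact: hom_mul | exact: row_fullM].
have [mu' [mumu' _]] := row_full_invertible fmu le.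
have fk' : row_full k.
  have -> : k = c' *m mu' by rewrite -kmu -mulmxA mumu' mulmx1.
  by apply: row_fullM fc' _; apply/row_fullP; exists mu.
have [k' [kk' k'k]] := row_free_invertible fk (row_full_geq fk').
exists Q, (c' *m q); split => //.
- exact: injective_retract hk (hom_inv hk kk' k'k) kk' iE'.
- exact: hom_mul.
- exact: row_fullM.
Qed.

Lemma linked_of_proj_id1 (P : rmod) : proj_id1 P -> exists J, inj_pd1 J /\ linked P J.
Proof.
case=> indP pP [/id_le1P [I0 [I1 [e [d [sed iI0 iI1]]]]] nid0]; have P_gt0 := indP.1.
have [Q [j [indQ pQ iQ hj fj]]] := projective_mono_projinj indP pP.
have uQ := nak indQ; case: (sed) => he _ fe _ _.
have [a [u [ha hu ja eu au]]] := uniserial_injective_summand uQ iQ iI0 P_gt0 hj fj he fe.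
have [J [p [s [r [sjp hs hr sr]]]]] := quotient_summand sed hj fj ha hu ja eu au.
have J_gt0 : (0 < rdim J)%N.
  rewrite lt0n; apply/negP => /eqP J0; apply: (nid0 0%N isT); apply/id_le0P.
  have dQ : rdim Q = rdim P by rewrite (ses_rdim sjp) J0 addn0.
  have [j' [jj' j'j]] := row_free_invertible fj (eq_leq dQ).
  exact: injective_retract hj (hom_inv hj jj' j'j) jj' iQ.
have lPJ : linked P J by exists Q, j, p; rewrite P_gt0 J_gt0.
exists J; split => //; split; last exact: linked_proj_dim1 lPJ pP.
- by case: sjp => _ hp _ fp _; exact: uniserial_indecomposable (uniserial_of_epi uQ hp fp) J_gt0.
- exact: injective_retract hs hr sr iI1.
Qed.

Lemma linked_of_inj_pd1 (J : rmod) : inj_pd1 J -> exists P, proj_id1 P /\ linked P J.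
Proof.
case=> indJ iJ [/pd_le1P [P1 [P0 [d [e [sde pP1 pP0]]]]] npd0]; have J_gt0 := indJ.1.
have [Q [p [indQ pQ iQ hp fp]]] := injective_epi_projinj indJ iJ.
have uQ := nak indQ; case: (sde) => _ he _ fe _.
have [a [u [ha hu ae up au]]] := uniserial_projective_summand uQ pQ pP0 J_gt0 hp fp he fe.
have [P [i [s [r [sip hs hr sr]]]]] := kernel_summand sde hp fp ha hu ae up au.
have pP := projective_retract hs hr sr pP1.
have P_gt0 : (0 < rdim P)%N.
  rewrite lt0n; apply/negP => /eqP P_0; apply: (npd0 0%N isT); apply/pd_le0P.
  have dQ : rdim Q = rdim J by rewrite (ses_rdim sip) P_0.
  have [p' [pp' p'p]] := row_full_invertible fp (eq_leq dQ).
  exact: projective_retract (hom_inv hp pp' p'p) hp p'p pQ.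
have lPJ : linked P J by exists Q, i, p; rewrite P_gt0 J_gt0.
exists P; split => //; split => //; last exact: linked_inj_dim1 lPJ iJ.
by case: sip => hi _ fi _ _; exact: uniserial_indecomposable (uniserial_of_mono uQ hi fi) P_gt0.
Qed.

Lemma linked_coker_iso (P J P' J' : rmod) :
  linked P J -> linked P' J' -> iso P P' -> iso J J'.
Proof.
case=> Q [i [p [indQ _ iQ sip /andP[P_gt0 _]]]].
case=> Q' [i' [p' [indQ' _ iQ' sip' /andP[P'_gt0 _]]]].
case=> f [f' [hf hf' ff' f'f]]; have [hi _ fi _ _] := sip; have [hi' _ fi' _ _] := sip'.
have [psi [hpsi ipsi]] := iQ' P Q i (f *m i') hi fi (hom_mul hf hi').
have [phi [hphi iphi]] := iQ P' Q' i' (f' *m i) hi' fi' (hom_mul hf' hi).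
have fpsi : row_free psi.
  apply: (uniserial_mono_ext (nak indQ) hi hpsi fi P_gt0).
  by rewrite ipsi row_freeM //; apply/row_freeP; exists f'.
have fphi : row_free phi.
  apply: (uniserial_mono_ext (nak indQ') hi' hphi fi' P'_gt0).
  by rewrite iphi row_freeM //; apply/row_freeP; exists f.
have [psi' [pp' p'p]] := row_free_invertible fpsi (row_free_leq fphi).
apply: (ses_iso_coker sip sip' hpsi pp' p'p).
  by rewrite ipsi -mulmxA (ses_mul0 sip') mulmx0.
have -> : i' = f' *m (i *m psi) by rewrite ipsi mulmxA f'f mul1mx.
by rewrite -!mulmxA (mulmxA psi) pp' mul1mx (ses_mul0 sip) mulmx0.
Qed.

Lemma linked_ker_iso (P J P' J' : rmod) :
  linked P J -> linked P' J' -> iso J J' -> iso P P'.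
Proof.
case=> Q [i [p [indQ pQ _ sip /andP[_ J_gt0]]]].
case=> Q' [i' [p' [indQ' pQ' _ sip' /andP[_ J'_gt0]]]].
case=> t [t' [ht ht' tt' t't]]; have [_ hp _ fp _] := sip; have [_ hp' _ fp' _] := sip'.
have [psi [hpsi psip]] := pQ Q' J' p' (p *m t) hp' fp' (hom_mul hp ht).
have [phi [hphi phip]] := pQ' Q J p (p' *m t') hp fp (hom_mul hp' ht').
have fpsi : row_full psi.
  apply: (uniserial_epi_lift (nak indQ') J'_gt0 hp' fp' hpsi _ psip).
  by rewrite row_fullM //; apply/row_fullP; exists t'.
have fphi : row_full phi.
  apply: (uniserial_epi_lift (nak indQ) J_gt0 hp fp hphi _ phip).
  by rewrite row_fullM //; apply/row_fullP; exists t.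
have [psi' [pp' p'p]] := row_full_invertible fpsi (row_full_geq fphi).
apply: (ses_iso_ker sip sip' hpsi pp' p'p).
  by rewrite -mulmxA psip mulmxA (ses_mul0 sip) mul0mx.
have psi'p : psi' *m p = p' *m t'.
  by rewrite -[p]mulmx1 -tt' (mulmxA p) -psip -!mulmxA (mulmxA psi') p'p mul1mx.
by rewrite -mulmxA psi'p mulmxA (ses_mul0 sip') mul0mx.
Qed.

End Nakayama.

End Modules.

Theorem mainTheorem9 (K : fieldType) (A : falgType K) :
  connected_alg A -> elementary_alg A -> nakayama A ->
  exists n : nat,
    num_iso_classes (fun P : rmod A => [/\ indecomposable P, projective_mod P & inj_dim_eq P 1])
                    n /\
    num_iso_classes (fun I : rmod A => [/\ indecomposable I, injective_mod I & proj_dim_eq I 1])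
                    n.
Proof.
move=> _ _ nak.
have [r [L finL]] := uniserial_projective_classes_finite A.
have [n classes] : exists n, num_iso_classes (@proj_id1 K A) n.
  apply: num_iso_classes_of_cover => P [indP pP _].
  exact: finL (nak P indP) indP.1 pP.
exists n; split => //; apply: num_iso_classes_transfer classes.
- exact: linked_of_proj_id1 nak.
- exact: linked_of_inj_pd1 nak.
- exact: linked_coker_iso nak.
- exact: linked_ker_iso nak.
Qed.
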